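(* Suppose $z=|\Sigma|\ge3$. If $\pi\in\mathrm{SR}^z$, then $\mathrm{TD}(\pi,\mathrm{R}\Pi^z)\le3$.
   Context: Fix a countably infinite set $X$ of variables and an alphabet $\Sigma$ disjoint from $X$. A pattern is a nonempty finite string over $X\cup\Sigma$; $\Pi^z$ is the class of all patterns over an alphabet of size $z$. A substitution is a morphism $h:(X\cup\Sigma)^*\to\Sigma^*$ fixing every letter; $L(\pi)$, the erasing pattern language, is the set of all $h(\pi)$. A pattern is regular if each variable occurs at most once; $\mathrm{R}\Pi^z$ is the class of regular patterns in $\Pi^z$. A pattern is simple block-regular if it has the shape $X_1a_1X_2\cdots a_{n-1}X_n$ with $X_i\in X^+$, $a_i\in\Sigma$, each $X_i$ containing a variable occurring in no other block; $\mathrm{SR}^z$ is the class of simple block-regular patterns in $\Pi^z$. A labelled example is $(w,\pm)$ with $w\in\Sigma^*$; a teaching set for $\pi$ w.r.t. a class $\Pi$ is a set $T$ of labelled examples consistent with $\pi$ ($w\in L(\pi)$ iff the label is $+$) such that every $\tau\in\Pi$ consistent with $T$ has $L(\tau)=L(\pi)$; $\mathrm{TD}(\pi,\Pi)$ is the minimum size of such a set. *)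

From HB Require Import structures.
From mathcomp Require Import all_boot.
Set Implicit Arguments. Unset Strict Implicit. Unset Printing Implicit Defensive.

(* Symbols of a pattern: variables from the countably infinite set X := nat,
   or letters from the finite alphabet Sigma. *)
Inductive sym (Sigma : Type) := Var of nat | Let of Sigma.
Arguments Var {Sigma}.
Arguments Let {Sigma}.

Definition sym_eqb (Sigma : eqType) (a b : sym Sigma) : bool :=
  match a, b with
  | Var x, Var y => x == y
  | Let c, Let d => c == d
  | _, _ => false
  end.

Lemma sym_eqP (Sigma : eqType) : Equality.axiom (@sym_eqb Sigma).
Proof.
case=> [x|c] [y|d] /=.
- by apply: (iffP eqP) => [->|[]].
- by constructor.
- by constructor.
- by apply: (iffP eqP) => [->|[]].
Qed.

HB.instance Definition _ (Sigma : eqType) := hasDecEq.Build (sym Sigma) (@sym_eqP Sigma).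

Definition pattern (Sigma : Type) := seq (sym Sigma).

Definition subst (Sigma : Type) (h : nat -> seq Sigma) (p : pattern Sigma) : seq Sigma :=
  flatten (map (fun s => match s with Var x => h x | Let a => [:: a] end) p).

(* Erasing pattern language membership. *)
Definition inL (Sigma : Type) (p : pattern Sigma) (w : seq Sigma) : Prop :=
  exists h : nat -> seq Sigma, subst h p = w.

Definition is_pattern (Sigma : Type) (p : pattern Sigma) : Prop := p <> [::].

Definition regular (Sigma : eqType) (p : pattern Sigma) : Prop :=
  forall x : nat, count (pred1 (Var x)) p <= 1.

Definition reg_class (Sigma : eqType) (p : pattern Sigma) : Prop :=
  is_pattern p /\ regular p.

(* Build X_1 a_1 X_2 ... a_{n-1} X_n from X_1 and the list [(a_1,X_2);...]. *)
Definition block_pattern (Sigma : Type) (X1 : seq nat) (rest : seq (Sigma * seq nat))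
  : pattern Sigma :=
  map Var X1 ++ flatten (map (fun aX => Let aX.1 :: map Var aX.2) rest).

Definition simple_block_regular (Sigma : eqType) (p : pattern Sigma) : Prop :=
  exists (X1 : seq nat) (rest : seq (Sigma * seq nat)),
    let B := X1 :: map snd rest in
    p = block_pattern X1 rest /\
    (forall i, i < size B -> nth [::] B i != [::]) /\
    (forall i, i < size B ->
       exists x, x \in nth [::] B i /\
         (forall j, j < size B -> j != i -> x \notin nth [::] B j)).

Definition same_lang (Sigma : Type) (p q : pattern Sigma) : Prop :=
  forall w, inL p w <-> inL q w.

(* Labelled examples: (w, true) = positive, (w, false) = negative. *)
Definition consistent (Sigma : eqType) (p : pattern Sigma) (T : seq (seq Sigma * bool)) : Prop :=
  forall e, e \in T -> (inL p e.1 <-> e.2 = true).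

Definition teaching_set (Sigma : eqType) (cls : pattern Sigma -> Prop)
  (p : pattern Sigma) (T : seq (seq Sigma * bool)) : Prop :=
  consistent p T /\ forall q, cls q -> consistent q T -> same_lang q p.

Definition TD_le (Sigma : eqType) (cls : pattern Sigma -> Prop) (p : pattern Sigma) (k : nat) : Prop :=
  exists T, size T <= k /\ teaching_set cls p T.

From mathcomp Require Import all_boot zify.
Set Implicit Arguments. Unset Strict Implicit. Unset Printing Implicit Defensive.

(* Write p = X_1 a_1 X_2 ... a_n X_(n+1) and u = a_1 ... a_n for its letters.
   Two facts about a regular pattern q carry the argument:
   - if every letter of q is followed by a variable ("q is guarded") and q
     starts with a variable, L(q) is the set of words in which the letters of
     q embed as a subsequence (guarded_langE);
   - a letter can be inserted at any cut of a word of L(q), unless the cut is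
     pinned by letters of q: at a first or last letter, or between two
     adjacent letters (regular_insert).
   The proof distinguishes two cases.
   * Every block has a variable occurring once in p: then L(p) is the set of
     supersequences of u.  If n = 0 the example (empty word, +) suffices.
     Otherwise, with the alphabet arranged on a cycle, the positive examples
     join the letters of u by forward walks (fwd_word) and by backward walks
     (bwd_word), and the negative example is a longest word avoiding u as a
     subsequence (avoid_word).  The positives force a consistent regular q to
     be guarded, so L(q) is the supersequences of its letter word c; the
     negative forces u to embed in c, and a cost count on the cycle shows u is
     a maximal common subsequence of the positives, so c = u.
   * Some block l has only repeated variables: then u, the word obtained by
     replacing every variable by a letter c, and (negatively) u with c
     inserted at block l, for a c differing from both neighbouring letters,
     are consistent with no regular pattern at all, while p is consistent
     with them. *)

Section Sequences.
Variable T : eqType.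
Implicit Types (s w : seq T).

Lemma cat_split_le (w1 w2 v1 v2 : seq T) :
  w1 ++ w2 = v1 ++ v2 -> size w1 <= size v1 ->
  exists r, v1 = w1 ++ r /\ w2 = r ++ v2.
Proof.
elim: w1 v1 => [|a w1 IH] [|b v1] //= E Hs; first by exists [::].
- by exists (b :: v1).
- by case: E => -> /IH/(_ Hs) [r [-> ->]]; exists r.
Qed.

Lemma subseq_cons_split (a : T) s w :
  subseq (a :: s) w -> exists w0 w1, w = w0 ++ a :: w1 /\ subseq s w1.
Proof.
elim: w => [//|b w IH] /=; case: eqP => [->|_] H; first by exists [::], w.
by have [w0 [w1 [-> H1]]] := IH H; exists (b :: w0), w1.
Qed.

Lemma split_first_occ (a : T) s :
  a \in s -> exists s1 s2, s = s1 ++ a :: s2 /\ a \notin s1.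
Proof.
elim: s => [//|x s IH]; rewrite inE; case: (a =P x) => [->|Hx] /= H.
  by exists [::], s.
have [s1 [s2 [-> H1]]] := IH H; exists (x :: s1), s2; split => //.
by rewrite inE negb_or H1 andbT; apply/eqP.
Qed.

Lemma subseq_cons_cat_notin (a : T) t s1 s2 :
  a \notin s1 -> subseq (a :: t) (s1 ++ s2) = subseq (a :: t) s2.
Proof.
elim: s1 => //= x s1 IH; rewrite inE negb_or => /andP [H1 H2].
by rewrite (negbTE H1) IH.
Qed.

Lemma subseq_extend (u c : seq T) : subseq u c -> size u < size c ->
  exists u1 u2 e, u = u1 ++ u2 /\ subseq (u1 ++ e :: u2) c.
Proof.
elim: c u => [|x c IH] [|y u] //= Hs Hlt.
  by exists [::], [::], x; split => //=; rewrite eqxx sub0seq.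
case: (y =P x) Hs => [->|_] Hs.
  have [u1 [u2 [e [-> H]]]] := IH u Hs Hlt.
  by exists (x :: u1), u2, e; rewrite /= eqxx.
case: (ltnP (size (y :: u)) (size c)) => H.
  have [u1 [u2 [e [E H']]]] := IH _ Hs H.
  by exists u1, u2, e; split => //; apply: subseq_trans H' (subseq_cons _ _).
have Hle := size_subseq Hs.
have Ec : y :: u = c by apply/eqP; rewrite -(size_subseq_leqif Hs); lia.
by exists [::], (y :: u), x; rewrite /= eqxx Ec.
Qed.

End Sequences.

Lemma path_adjacent (T : Type) (R : rel T) x s w1 w2 a b :
  path R x s -> x :: s = w1 ++ a :: b :: w2 -> R a b.
Proof.
elim: w1 x s => [|c w1 IH] x s /= Hp [E1 E2]; subst; first by case/andP: Hp.
case: w1 IH Hp => [|d w1] IH /= Hp; first by case/and3P: Hp.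
by case/andP: Hp => _ Hp; apply: (IH d (w1 ++ a :: b :: w2)).
Qed.

Section Patterns.
Variable S : eqType.
Implicit Types (q : pattern S) (h : nat -> seq S) (w : seq S).

Definition subst_sym h (s : sym S) : seq S :=
  match s with Var x => h x | Let a => [:: a] end.

Lemma subst_cons h s q : subst h (s :: q) = subst_sym h s ++ subst h q.
Proof. by []. Qed.

Lemma subst_cat h q1 q2 : subst h (q1 ++ q2) = subst h q1 ++ subst h q2.
Proof. by rewrite /subst map_cat flatten_cat. Qed.

Lemma subst_rcons h q s : subst h (rcons q s) = subst h q ++ subst_sym h s.
Proof. by rewrite -cats1 subst_cat /subst /= cats0. Qed.

Lemma subst_adjacent h q1 q2 a b :
  subst h (q1 ++ Let a :: Let b :: q2) = subst h q1 ++ a :: b :: subst h q2.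
Proof. by rewrite subst_cat. Qed.

Lemma subst_eq_on h h' q :
  (forall x, Var x \in q -> h x = h' x) -> subst h q = subst h' q.
Proof.
elim: q => [//|s q IH] H; rewrite !subst_cons IH => [|x Hx]; last first.
  by apply: H; rewrite inE Hx orbT.
by case: s H => [x|a] H //=; rewrite H // inE eqxx.
Qed.

Definition upd h x v : nat -> seq S := fun y => if y == x then v else h y.

Lemma subst_upd_notin h x v q :
  Var x \notin q -> subst (upd h x v) q = subst h q.
Proof.
move=> Hn; apply: subst_eq_on => y Hy; rewrite /upd; case: eqP => // E.
by subst y; rewrite Hy in Hn.
Qed.

Lemma regular_behead s q : regular (s :: q) -> regular q.
Proof. by move=> H x; have := H x; rewrite /=; case: (_ == _) => //= /ltnW. Qed.

Lemma regular_disj q1 q2 x :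
  regular (q1 ++ q2) -> Var x \in q1 -> Var x \notin q2.
Proof.
move=> H H1; apply/negP => H2; have := H x; rewrite count_cat.
by rewrite -!has_pred1 !has_count in H1 H2; lia.
Qed.

Lemma regular_head x q : regular (Var x :: q) -> Var x \notin q.
Proof. by move=> H; apply: (@regular_disj [:: Var x]) => //; rewrite inE. Qed.

(* The letters of a pattern, in order: the only part of a pattern that
   survives every substitution. *)
Definition letters q : seq S :=
  flatten (map (fun s => if s is Let a then [:: a] else [::]) q).

Lemma letters_cat q1 q2 : letters (q1 ++ q2) = letters q1 ++ letters q2.
Proof. by rewrite /letters map_cat flatten_cat. Qed.

Lemma letters_subseq_subst h q : subseq (letters q) (subst h q).
Proof.
elim: q => [//|[x|a] q IH]; rewrite subst_cons /=; last by rewrite eqxx.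
exact: subseq_trans IH (suffix_subseq _ _).
Qed.

Lemma size_subst_ge h q y :
  size (letters q) + count (pred1 (Var y)) q * size (h y) <= size (subst h q).
Proof.
elim: q => [|[x|a] q IH] //; rewrite subst_cons size_cat /=.
  case: eqP => [[->]|_] /=; rewrite ?mul1n ?mul0n ?add0n.
    by rewrite mulnDl mul1n addnCA leq_add2l.
  exact: leq_trans IH (leq_addl _ _).
Qed.

Fixpoint guarded q : bool :=
  match q with
  | [::] => true
  | Var _ :: q' => guarded q'
  | Let _ :: q' => if q' is Var _ :: _ then guarded q' else false
  end.

Definition starts_with_letter q : bool := if q is Let _ :: _ then true else false.

Lemma guarded_vars_cat (X : seq nat) q : guarded (map Var X ++ q) = guarded q.
Proof. by elim: X. Qed.

Lemma letterless_guarded q :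
  letters q = [::] -> guarded q && ~~ starts_with_letter q.
Proof. by elim: q => [|[x|a] q IH] //= /IH /andP [Hg _]; rewrite Hg. Qed.

Lemma unguarded_witness q : ~~ guarded q ->
  (exists q1 q2 a b, q = q1 ++ Let a :: Let b :: q2) \/
  (exists q' b, q = rcons q' (Let b)).
Proof.
elim: q => [//|[x|a] q IH] /=.
  move=> /IH [[q1 [q2 [a [b ->]]]]|[q' [b ->]]].
    by left; exists (Var x :: q1), q2, a, b.
  by right; exists (Var x :: q'), b.
case: q IH => [|[y|b] q] IH H.
- by right; exists [::], a.
- case: (IH H) => [[q1 [q2 [a' [b ->]]]]|[q' [b ->]]].
    by left; exists (Let a :: q1), q2, a', b.
  by right; exists (Let a :: q'), b.
- by left; exists [::], q, a, b.
Qed.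

(* In a guarded regular pattern every letter is followed by a fresh variable,
   which can absorb an arbitrary word; so the language contains every word
   in which the letters embed (with the first letter in front, if the pattern
   starts with a letter). *)
Lemma guarded_supseq_gen q : q != [::] -> guarded q -> regular q ->
  forall w, subseq (letters q) w ->
  (forall a q', q = Let a :: q' -> exists w', w = a :: w') -> inL q w.
Proof.
elim: q => [//|[x|a] q IH] _ Hg Hr w Hw Hhead.
- have Hx := regular_head Hr.
  have Hr' := regular_behead Hr; clear Hr Hhead.
  case: q IH Hg Hr' Hw Hx => [|[y|a] q] IH Hg Hr' Hw Hx.
  + by exists (fun _ => w); rewrite subst_cons /= cats0.
  + have [h Eh] : inL (Var y :: q) w by apply: IH => // a' q' [].
    by exists (upd h x [::]); rewrite subst_cons subst_upd_notin //= /upd eqxx Eh.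
  + have [w0 [w1 [Ew Hw1]]] := subseq_cons_split Hw.
    have [h Eh] : inL (Let a :: q) (a :: w1).
      by apply: IH => //= [|_ _ [<- _]]; [rewrite eqxx | exists w1].
    by exists (upd h x w0); rewrite subst_cons subst_upd_notin //= /upd eqxx Eh Ew.
- have [w' Ew] := Hhead a q erefl; subst w; clear Hhead.
  case: q IH Hg Hr Hw => [|[y|b] q] IH //= Hg Hr; rewrite eqxx => Hw.
  have [h Eh] : inL (Var y :: q) w' by apply: IH (regular_behead Hr) _ _ _ => // ? ? [].
  by exists h; rewrite subst_cons Eh.
Qed.

Lemma guarded_supseq q : q != [::] -> guarded q -> regular q ->
  ~~ starts_with_letter q ->
  forall w, subseq (letters q) w -> inL q w.
Proof.
move=> Hq Hg Hr Hs w Hw; apply: guarded_supseq_gen => // a q' Eq.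
by rewrite Eq in Hs.
Qed.

Lemma guarded_langE q : q != [::] -> guarded q -> regular q ->
  ~~ starts_with_letter q -> forall w, inL q w <-> subseq (letters q) w.
Proof.
move=> Hq Hg Hr Hs w; split; last exact: guarded_supseq.
by case=> h <-; apply: letters_subseq_subst.
Qed.

Inductive insert_spec q h w1 w2 (e : S) : Prop :=
  | InsertInL of inL q (w1 ++ e :: w2)
  | InsertAtHead a q' of q = Let a :: q' & w1 = [::]
  | InsertAtEnd q' b of q = rcons q' (Let b) & w2 = [::]
  | InsertBetween q1 q2 a b of
      q = q1 ++ Let a :: Let b :: q2 & w1 = rcons (subst h q1) a.

Lemma regular_insert q h w1 w2 e : q != [::] -> regular q ->
  subst h q = w1 ++ w2 -> insert_spec q h w1 w2 e.
Proof.
elim: q w1 w2 => [//|s q IH] w1 w2 _ Hr E.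
have Hr' := regular_behead Hr.
case: s Hr E => [x|a] Hr E.
- have Hx := regular_head Hr.
  rewrite subst_cons /= in E.
  have [Hle|Hlt] := leqP (size w1) (size (h x)).
    have [r [Ehx Ew2]] := cat_split_le (esym E) Hle.
    apply: InsertInL; exists (upd h x (w1 ++ e :: r)).
    by rewrite subst_cons subst_upd_notin //= /upd eqxx -catA /= Ew2.
  have [r [Ew1 E']] := cat_split_le E (ltnW Hlt).
  have Hr0 : r != [::] by apply: contraTneq Hlt => Er; rewrite Ew1 Er cats0 ltnn.
  have Hq : q != [::].
    by apply: contraNneq Hr0 => Eq; move: E'; rewrite Eq; case: (r).
  case: (IH r w2 Hq Hr' E') => [[h' Eh']|a q' Eq Er|q' b Eq Ew2|q1 q2 a b Eq Er].
  + apply: InsertInL; exists (upd h' x (h x)).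
    by rewrite subst_cons subst_upd_notin //= /upd eqxx Eh' Ew1 catA.
  + by rewrite Er in Hr0.
  + by apply: (@InsertAtEnd _ _ _ _ _ (Var x :: q') b); rewrite ?Eq.
  + apply: (@InsertBetween _ _ _ _ _ (Var x :: q1) q2 a b); first by rewrite Eq.
    by rewrite Ew1 Er subst_cons rcons_cat.
- case: w1 E => [|c w1] E; first exact: InsertAtHead.
  rewrite subst_cons /= in E; case: E => <- E; clear Hr.
  case: q IH Hr' E => [|s q] IH Hr' E.
    have [-> ->] : w1 = [::] /\ w2 = [::] by case: w1 w2 E => [|? ?] [|? ?].
    exact: (@InsertAtEnd _ _ _ _ _ [::] a).
  case: (IH w1 w2 isT Hr' E) => [[h' Eh']|b q' Eq Ew1|q' b Eq Ew2|q1 q2 b d Eq Ew1].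
  + by apply: InsertInL; exists h'; rewrite subst_cons Eh'.
  + by apply: (@InsertBetween _ _ _ _ _ [::] q' a b); rewrite ?Eq ?Ew1.
  + by apply: (@InsertAtEnd _ _ _ _ _ (Let a :: q') b); rewrite ?Eq.
  + by apply: (@InsertBetween _ _ _ _ _ (Let a :: q1) q2 b d); rewrite ?Eq ?Ew1.
Qed.

Lemma consistent_pos q (T : seq (seq S * bool)) w :
  consistent q T -> (w, true) \in T -> inL q w.
Proof. by move=> H /H [_ Hw]; apply: Hw. Qed.

Lemma consistent_neg q (T : seq (seq S * bool)) w :
  consistent q T -> (w, false) \in T -> ~ inL q w.
Proof. by move=> H /H [Hw _] /Hw. Qed.

End Patterns.

Section BlockPatterns.
Variable S : eqType.
Implicit Types (q : pattern S) (h : nat -> seq S) (w : seq S).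
Implicit Types (rest : seq (S * seq nat)).

Lemma block_pattern_nil (X1 : seq nat) : block_pattern X1 [::] = map Var X1 :> pattern S.
Proof. by rewrite /block_pattern /= cats0. Qed.

Lemma block_pattern_cons (X1 : seq nat) (a : S) X rest :
  block_pattern X1 ((a, X) :: rest) = map Var X1 ++ Let a :: block_pattern X rest.
Proof. by []. Qed.

Lemma letters_vars (X : seq nat) : letters (map Var X : pattern S) = [::].
Proof. by elim: X. Qed.

Lemma letters_block_pattern (X1 : seq nat) rest : letters (block_pattern X1 rest) = map fst rest.
Proof.
elim: rest X1 => [|[a X] rest IH] X1; first by rewrite block_pattern_nil letters_vars.
by rewrite block_pattern_cons letters_cat letters_vars /= -(IH X).
Qed.

Lemma subst_vars h (X : seq nat) : subst h (map Var X) = flatten (map h X).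
Proof. by elim: X => //= x X IH; rewrite subst_cons IH. Qed.

Lemma subst_block_pattern h X1 rest : subst h (block_pattern X1 rest) =
  flatten (map h X1) ++ flatten [seq aX.1 :: flatten (map h aX.2) | aX <- rest].
Proof.
elim: rest X1 => [|[a X] rest IH] X1.
  by rewrite block_pattern_nil subst_vars cats0.
by rewrite block_pattern_cons subst_cat subst_vars subst_cons IH.
Qed.

Lemma flatten_map_nil (T : Type) (U : eqType) (f : U -> seq T) (s : seq U) :
  (forall v, v \in s -> f v = [::]) -> flatten (map f s) = [::].
Proof.
elim: s => //= v s IH H; rewrite H ?mem_head // IH // => v' Hv'.
by rewrite H // inE Hv' orbT.
Qed.

Lemma subst_nil_block_pattern (X1 : seq nat) rest :
  subst (fun _ => [::]) (block_pattern X1 rest) = map fst rest.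
Proof.
rewrite subst_block_pattern (@flatten_map_nil _ _ (fun _ => [::])) //=.
by elim: rest => //= aX rest ->; rewrite (@flatten_map_nil _ _ (fun _ => [::])).
Qed.

Lemma var_in_block_pattern (X1 : seq nat) rest i y :
  y \in nth [::] (X1 :: map snd rest) i -> Var y \in (block_pattern X1 rest : pattern S).
Proof.
have Hinj : injective (@Var S) by move=> ? ? [].
elim: rest X1 i => [|[a X] rest IH] X1 [|i] /=.
- by rewrite block_pattern_nil mem_map.
- by rewrite nth_nil.
- by move=> H; rewrite block_pattern_cons mem_cat mem_map ?H.
- by move=> H; rewrite block_pattern_cons mem_cat inE (IH X i H) !orbT.
Qed.

Lemma blocks_nonempty (X1 : seq nat) rest :
  let B := X1 :: map snd rest in
  (forall i, i < size B -> nth [::] B i != [::]) ->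
  X1 != [::] /\ all (fun aX => aX.2 != [::]) rest.
Proof.
move=> B Hne; split; first exact: (Hne 0).
apply/allP => aX HaX; have := Hne (index aX rest).+1.
by rewrite /= size_map ltnS index_mem HaX (nth_map aX) ?index_mem // nth_index //; apply.
Qed.

Lemma block_pattern_guarded (X1 : seq nat) rest :
  all (fun aX => aX.2 != [::]) rest -> guarded (block_pattern X1 rest).
Proof.
elim: rest X1 => [|[a [|x X]] rest IH] X1; first by rewrite block_pattern_nil; elim: X1.
  by [].
by case/andP=> _ Hall; rewrite block_pattern_cons guarded_vars_cat /= IH.
Qed.

Lemma block_pattern_head (X1 : seq nat) rest : X1 != [::] ->
  ~~ starts_with_letter (block_pattern X1 rest : pattern S).
Proof. by case: X1. Qed.

Definition keep_sym (keep : pred nat) (s : sym S) : bool :=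
  if s is Var y then keep y else true.

Lemma filter_block_pattern keep X1 rest :
  filter (keep_sym keep) (block_pattern X1 rest) =
  block_pattern (filter keep X1) [seq (aX.1, filter keep aX.2) | aX <- rest].
Proof.
elim: rest X1 => [|[a X] rest IH] X1; first by rewrite !block_pattern_nil filter_map.
by rewrite !block_pattern_cons filter_cat filter_map /= IH.
Qed.

Lemma subst_filter keep h h' q :
  (forall x, ~~ keep x -> h x = [::]) -> (forall x, keep x -> h x = h' x) ->
  subst h q = subst h' (filter (keep_sym keep) q).
Proof.
move=> H0 H1; elim: q => [//|[x|a] q IH] /=; last by rewrite !subst_cons IH.
case: (boolP (keep x)) => Hk; rewrite subst_cons /= ?subst_cons /= IH.
  by rewrite H1.
by rewrite H0.
Qed.

Lemma count_filter_keep keep q y :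
  count (pred1 (Var y)) (filter (keep_sym keep) q) =
  if keep y then count (pred1 (Var y)) q else 0.
Proof.
rewrite count_filter; case: (boolP (keep y)) => Hk.
  by apply: eq_count => s /=; case: eqP => // ->.
rewrite (eq_count (a2 := pred0)) ?count_pred0 // => s /=.
by case: eqP => // -> /=; apply: negbTE.
Qed.

Definition occurs_once q y : bool := count (pred1 (Var y)) q == 1.

Definition unique_in_every_block (X1 : seq nat) rest : bool :=
  let p := block_pattern X1 rest in
  has (occurs_once p) X1 && all (fun aX => has (occurs_once p) aX.2) rest.

(* If every block has a variable occurring once, erasing the other variables
   leaves a guarded regular pattern; hence the language contains every word
   in which a_1 ... a_n embeds. *)
Lemma unique_blocks_supseq (X1 : seq nat) rest : unique_in_every_block X1 rest ->
  forall w, subseq (map fst rest) w -> inL (block_pattern X1 rest) w.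
Proof.
case/andP=> H1 Hall w Hw.
set p := block_pattern X1 rest; set keep := occurs_once p.
set X1' := filter keep X1; set rest' := [seq (aX.1, filter keep aX.2) | aX <- rest].
have Ep' : filter (keep_sym keep) p = block_pattern X1' rest' by exact: filter_block_pattern.
have HX1' : X1' != [::] by rewrite -has_filter.
have Hr : regular (block_pattern X1' rest').
  by move=> y; rewrite -Ep' count_filter_keep; case: ifP => // /eqP ->.
have Hg : guarded (block_pattern X1' rest').
  apply: block_pattern_guarded; rewrite all_map; apply: sub_all Hall => aX /=.
  by rewrite -has_filter.
have [h' Eh'] : inL (block_pattern X1' rest') w.
  apply: guarded_supseq => //; first by case: (X1') HX1'.
    exact: block_pattern_head.
  by rewrite letters_block_pattern -map_comp.
exists (fun y => if keep y then h' y else [::]).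
by rewrite (@subst_filter keep _ h') ?Ep' // => x; [move/negbTE -> | move->].
Qed.

Lemma repeated_block_exists (X1 : seq nat) rest :
  ~~ unique_in_every_block X1 rest ->
  exists2 l, l <= size rest & forall y, y \in nth [::] (X1 :: map snd rest) l ->
    ~~ occurs_once (block_pattern X1 rest) y.
Proof.
rewrite /unique_in_every_block negb_and => /orP [/hasPn H1|/allPn [aX HaX /hasPn Hn]].
  by exists 0.
exists (index aX rest).+1; first by rewrite index_mem.
by rewrite /= (nth_map aX) ?index_mem // nth_index.
Qed.

Lemma unique_blocks_langE (X1 : seq nat) rest : unique_in_every_block X1 rest ->
  forall w, inL (block_pattern X1 rest) w <-> subseq (map fst rest) w.
Proof.
move=> Hu w; split; last exact: unique_blocks_supseq.
by case=> h <-; rewrite -(letters_block_pattern X1); apply: letters_subseq_subst.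
Qed.

End BlockPatterns.

Section Insertion.
Variable T : Type.
Implicit Types (u : seq T).

Definition insert_at k (x : T) u : seq T := take k u ++ x :: drop k u.

Lemma size_insert_at k x u : k <= size u -> size (insert_at k x u) = (size u).+1.
Proof. by move=> Hk; rewrite size_cat /= size_drop size_takel //; lia. Qed.

Lemma nth_insert_at (d : T) k x u i : k <= size u ->
  nth d (insert_at k x u) i =
  if i < k then nth d u i else if i == k then x else nth d u i.-1.
Proof.
move=> Hk; rewrite nth_cat size_takel //; case: ltnP => Hik; first by rewrite nth_take.
case: eqP => [->|Hne]; first by rewrite subnn.
have -> : i - k = (i.-1 - k).+1 by lia.
by rewrite /= nth_drop; congr nth; lia.
Qed.

Lemma insert_at_neighbour (d : T) k l x c u : k <= size u -> l <= size u ->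
  k != l -> insert_at k x u = insert_at l c u ->
  c = nth d u l.-1 \/ c = nth d u l.
Proof.
move=> Hk Hl Hkl E; have := congr1 (nth d ^~ l) E.
rewrite !nth_insert_at // ltnn eqxx eq_sym (negbTE Hkl).
by case: ltnP => _ ->; [right | left].
Qed.

Lemma interleave_empty_gaps (rs : seq (T * seq T)) :
  sumn [seq size r.2 | r <- rs] = 0 -> flatten [seq r.1 :: r.2 | r <- rs] = map fst rs.
Proof. by elim: rs => //= [[a [|? ?]] rs IH] //= H; rewrite IH. Qed.

Lemma single_insertion (g0 : seq T) (rs : seq (T * seq T)) :
  size g0 + sumn [seq size r.2 | r <- rs] = 1 ->
  exists k x, [/\ k <= size rs, nth [::] (g0 :: map snd rs) k = [:: x] &
    g0 ++ flatten [seq r.1 :: r.2 | r <- rs] = insert_at k x (map fst rs)].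
Proof.
elim: rs g0 => [|[a g1] rs IH] [|x g0] //= H.
- by case: g0 H => // _; exists 0, x.
- have [k [y [Hk Hg E]]] := IH g1 H.
  by exists k.+1, y; rewrite E.
- exists 0, x; case: g0 H => //= H; split => //.
  have -> : g1 = [::] by case: g1 H.
  by rewrite interleave_empty_gaps //; lia.
Qed.

End Insertion.

Section NonRegularCase.
Variable S : eqType.
Implicit Types (q : pattern S) (h : nat -> seq S) (w : seq S).
Implicit Types (rest : seq (S * seq nat)).

Definition c_linked (c : S) : rel S := fun x y => (x == c) || (y == c).

Lemma nseq_c_linked (c : S) n : path (c_linked c) c (nseq n c) /\ last c (nseq n c) = c.
Proof. by elim: n => //= n [-> ->]; rewrite /c_linked eqxx. Qed.

Lemma subst_const_vars (c : S) (X : seq nat) :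
  flatten (map (fun _ => [:: c]) X) = nseq (size X) c.
Proof. by elim: X => //= x X ->. Qed.

Lemma subst_const_shape (c : S) (X1 : seq nat) rest :
  X1 != [::] -> all (fun aX => aX.2 != [::]) rest ->
  exists P, [/\ subst (fun _ => [:: c]) (block_pattern X1 rest) = c :: P,
    path (c_linked c) c P & last c P = c].
Proof.
move=> HX1 Hall.
set tail := flatten [seq aX.1 :: flatten (map (fun _ => [:: c]) aX.2) | aX <- rest].
have [Hpt Hlt] : path (c_linked c) c tail /\ last c tail = c.
  rewrite /tail {tail}; elim: rest Hall => [|[a X] rest IH] //= /andP [HX Hall].
  rewrite subst_const_vars; case: X HX => [//|x X] _ /=.
  have [Hp Hl] := nseq_c_linked c (size X); have [Hp' Hl'] := IH Hall.
  by rewrite cat_path last_cat /c_linked !eqxx orbT -/(c_linked c) Hp Hl Hp' Hl'.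
case: X1 HX1 => [//|x X1] _.
have [Hp Hl] := nseq_c_linked c (size X1).
exists (nseq (size X1) c ++ tail).
by rewrite subst_block_pattern subst_const_vars cat_path last_cat Hp Hl Hpt Hlt.
Qed.

(* If some block [l] consists of variables each occurring at least twice, a
   word of length [n+1] from the pattern must erase block [l], so it cannot be
   the letter word with a letter [c] inserted at block [l] that differs from
   both of its neighbours. *)
Lemma repeated_block_negative (X1 : seq nat) rest l (c d0 : S) :
  let p := block_pattern X1 rest in let u := map fst rest in
  l <= size rest ->
  (forall y, y \in nth [::] (X1 :: map snd rest) l -> ~~ occurs_once p y) ->
  c != nth d0 u l.-1 -> c != nth d0 u l -> ~ inL p (insert_at l c u).
Proof.
move=> p u Hl Hrep Hc1 Hc2 [h Eh].
have Hlu : l <= size u by rewrite size_map.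
set g := fun X => flatten (map h X).
set rs := [seq (aX.1, g aX.2) | aX <- rest].
have Hu : map fst rs = u by rewrite -map_comp.
have Hgaps : g X1 :: map snd rs = map g (X1 :: map snd rest) by rewrite /rs /= -!map_comp.
have Esub : subst h p = g X1 ++ flatten [seq r.1 :: r.2 | r <- rs].
  by rewrite subst_block_pattern -map_comp.
have Hsize : size (subst h p) = (size u).+1 by rewrite Eh size_insert_at.
have Hone : size (g X1) + sumn [seq size r.2 | r <- rs] = 1.
  move: Hsize; rewrite Esub size_cat -Hu size_map.
  suff -> : forall rs' : seq (S * seq S), size (flatten [seq r.1 :: r.2 | r <- rs']) =
      size rs' + sumn [seq size r.2 | r <- rs'] by lia.
  by elim=> //= r rs' IH; rewrite size_cat /= IH; lia.
have Herased : nth [::] (g X1 :: map snd rs) l = [::].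
  rewrite Hgaps (nth_map [::]) /=; last by rewrite size_map; lia.
  apply: flatten_map_nil => y Hy; apply/nilP; rewrite /nilp -leqn0.
  have Hin : Var y \in p := var_in_block_pattern Hy.
  have : 1 < count (pred1 (Var y)) p.
    by move: (Hrep y Hy) Hin; rewrite /occurs_once -has_pred1 has_count; lia.
  have := size_subst_ge h p y; rewrite Hsize letters_block_pattern -/u.
  by nia.
have [k [x [Hk Hgk Ek]]] := single_insertion Hone.
have Hkl : k != l by apply/eqP => Ekl; move: Hgk; rewrite Ekl Herased.
rewrite Hu -Esub Eh in Ek.
have Hku : k <= size u by rewrite -Hu size_map.
by have [] := insert_at_neighbour d0 Hku Hlu Hkl (esym Ek); apply/eqP.
Qed.

(* A regular pattern generating [u] and a word [c :: P] in which [c] touches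
   every adjacent pair, and which starts and ends with [c], also generates
   [u] with [c] inserted at any position [l] whose neighbours differ from [c]:
   the only obstructions to inserting a letter are letters of the pattern
   around the cut, and they would appear next to each other in [c :: P]. *)
Lemma regular_insert_linked q (u P : seq S) l (c d0 : S) :
  q != [::] -> regular q -> l <= size u -> inL q u -> inL q (c :: P) ->
  path (c_linked c) c P -> last c P = c ->
  c != nth d0 u l.-1 -> c != nth d0 u l -> inL q (insert_at l c u).
Proof.
move=> Hq Hr Hl [h Eh] [hP EhP] HpP HlP Hc1 Hc2.
have Eu : subst h q = take l u ++ drop l u by rewrite cat_take_drop.
case: (regular_insert c Hq Hr Eu) => [//|a q' Eq Etake|q' b Eq Edrop|q1 q2 a b Eq Etake].
- move: Eh EhP; rewrite Eq !subst_cons /= => Eh [Eca _].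
  have Hl0 : l = 0 by move: Etake; rewrite -Eh /=; case: (l).
  by move: Hc1; rewrite Hl0 -Eh /= Eca eqxx.
- move: Eh EhP; rewrite Eq !subst_rcons /= !cats1 => Eh EhP.
  have Hb : b = c by have := congr1 (last c) EhP; rewrite last_rcons /= HlP.
  have Hl0 : l = size u by have := congr1 size Edrop; rewrite size_drop /=; lia.
  by move: Hc1; rewrite Hl0 nth_last -Eh last_rcons Hb eqxx.
- move: Eh EhP; rewrite Eq !subst_adjacent => Eh EhP.
  have /orP Hab := path_adjacent HpP (esym EhP).
  have Hl1 : l = (size (subst h q1)).+1.
    by have := congr1 size Etake; rewrite size_takel // size_rcons.
  move: Hc1 Hc2; rewrite Hl1 -Eh !nth_cat ltnn subnn /= ltnNge leqnSn /= subSnn /=.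
  by case: Hab => /eqP ->; rewrite eqxx.
Qed.

(* Teaching set when some block has no variable occurring once: no regular
   pattern at all is consistent with it. *)
Lemma repeated_block_teaching (X1 : seq nat) rest l (c d0 : S) :
  let p := block_pattern X1 rest in let u := map fst rest in
  X1 != [::] -> all (fun aX => aX.2 != [::]) rest -> l <= size rest ->
  (forall y, y \in nth [::] (X1 :: map snd rest) l -> ~~ occurs_once p y) ->
  c != nth d0 u l.-1 -> c != nth d0 u l ->
  teaching_set (@reg_class S) p
    [:: (u, true); (subst (fun _ => [:: c]) p, true); (insert_at l c u, false)].
Proof.
move=> p u HX1 Hall Hl Hrep Hc1 Hc2.
have Hneg := repeated_block_negative Hl Hrep Hc1 Hc2.
have [P [EP HpP HlP]] := subst_const_shape c HX1 Hall.
split.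
  move=> e; rewrite !inE => /or3P [] /eqP -> /=; split => // _.
  - by exists (fun _ => [::]); rewrite subst_nil_block_pattern.
  - by exists (fun _ => [:: c]).
move=> q [/eqP Hq Hr] Hcons.
have Hu : inL q u by apply: consistent_pos Hcons _; rewrite inE eqxx.
have HP : inL q (c :: P).
  by rewrite -EP; apply: consistent_pos Hcons _; rewrite !inE eqxx orbT.
have HN : ~ inL q (insert_at l c u).
  by apply: consistent_neg Hcons _; rewrite !inE eqxx !orbT.
have Hlu : l <= size u by rewrite size_map.
by case: HN; apply: regular_insert_linked Hq Hr Hlu Hu HP HpP HlP Hc1 Hc2.
Qed.

End NonRegularCase.

Section CyclicOrder.
Variable S : finType.
Local Notation n := #|S|.

Definition rank (x : S) : nat := index x (enum S).

Lemma rank_lt x : rank x < n.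
Proof. by rewrite /rank cardE index_mem mem_enum. Qed.

Lemma rank_inj : injective rank.
Proof.
move=> x y E; have := nth_index x (mem_enum S x); have := nth_index x (mem_enum S y).
by rewrite /rank in E; rewrite E => ->.
Qed.

Lemma rank_nth i (x0 : S) : i < n -> rank (nth x0 (enum S) i) = i.
Proof. by move=> H; rewrite /rank index_uniq ?enum_uniq // -cardE. Qed.

Lemma eq_rank x y : (x == y) = (rank x == rank y).
Proof. by apply/eqP/eqP => [->|/rank_inj]. Qed.

Definition csucc (x : S) : S :=
  nth x (enum S) (if (rank x).+1 < n then (rank x).+1 else 0).
Definition cpred (x : S) : S :=
  nth x (enum S) (if rank x == 0 then n.-1 else (rank x).-1).

Lemma rank_csucc x : rank (csucc x) = if (rank x).+1 < n then (rank x).+1 else 0.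
Proof. by have := rank_lt x => Hx; rewrite /csucc rank_nth //; case: ifP => //; lia. Qed.

Lemma rank_cpred x : rank (cpred x) = if rank x == 0 then n.-1 else (rank x).-1.
Proof. by have := rank_lt x => Hx; rewrite /cpred rank_nth //; case: ifP => //; lia. Qed.

(* [cdist x y] is the number of forward steps from [x] to [y], in [0, n).
   A forward step costs [fcost x y], which is a full turn when [x = y];
   a backward move costs [bcost x y]. *)
Definition cdist (x y : S) : nat :=
  if rank x <= rank y then rank y - rank x else n + rank y - rank x.
Definition fcost (x y : S) : nat := if x == y then n else cdist x y.
Definition bcost (x y : S) : nat := cdist y x.

(* Every statement below is linear arithmetic on the ranks involved. *)
Ltac rank_arith :=
  rewrite /fcost /bcost /cdist ?eq_rank ?rank_csucc ?rank_cpred;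
  repeat match goal with |- context [rank ?x] =>
    let H := fresh in have H := rank_lt x; move: H; generalize (rank x); intro end;
  repeat (match goal with |- context [if ?c then _ else _] =>
    lazymatch c with context [if _ then _ else _] => fail | _ =>
      let E := fresh in case E: c end end);
  intros; lia.

Lemma cdist_xx x : cdist x x = 0. Proof. rank_arith. Qed.
Lemma cdist0_eq x y : cdist x y = 0 -> x = y.
Proof. by move=> H; apply: rank_inj; move: H; rank_arith. Qed.
Lemma bcost_xx x : bcost x x = 0. Proof. rank_arith. Qed.
Lemma fcost_gt0 x y : 0 < fcost x y. Proof. rank_arith. Qed.

Lemma cdist_fcost_tri x y w : cdist x w <= fcost x y + cdist y w. Proof. rank_arith. Qed.
Lemma fcost_cdist_tri x y w : fcost x w <= fcost x y + cdist y w. Proof. rank_arith. Qed.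
Lemma bcost_tri x y w : bcost x w <= bcost x y + bcost y w. Proof. rank_arith. Qed.

Lemma fcost_csucc x : fcost x (csucc x) = 1. Proof. rank_arith. Qed.
Lemma fcost_cpred x : fcost (cpred x) x = 1. Proof. rank_arith. Qed.
Lemma cdist_csucc_l x y : x != y -> cdist (csucc x) y = (cdist x y).-1. Proof. rank_arith. Qed.
Lemma cdist_cpred_r x y : x != y -> cdist y (cpred x) = (cdist y x).-1. Proof. rank_arith. Qed.
Lemma cdist_csucc_x x : cdist (csucc x) x = n.-1. Proof. rank_arith. Qed.
Lemma csucc_cpred x : csucc (cpred x) = x. Proof. by apply: rank_inj; rank_arith. Qed.

Lemma insert_cost_between x e y :
  fcost x e + fcost e y <= fcost x y -> bcost x e + bcost e y <= bcost x y -> False.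
Proof. rank_arith. Qed.

Fixpoint path_cost (c : S -> S -> nat) (x : S) (s : seq S) : nat :=
  if s is y :: s' then c x y + path_cost c y s' else 0.

Lemma path_cost_cat c x s1 s2 :
  path_cost c x (s1 ++ s2) = path_cost c x s1 + path_cost c (last x s1) s2.
Proof. by elim: s1 x => //= y s1 IH x; rewrite IH addnA. Qed.

Section SubseqCost.
Variables c0 c1 : S -> S -> nat.
Hypothesis c0_xx : forall x, c0 x x = 0.
Hypothesis c0_tri : forall x y w, c0 x w <= c1 x y + c0 y w.
Hypothesis c1_tri : forall x y w, c1 x w <= c1 x y + c0 y w.

Lemma dist_le_path_cost x v : c0 x (last x v) <= path_cost c1 x v.
Proof.
elim: v x => /= [|y v IH] x; first by rewrite c0_xx.
by apply: leq_trans (c0_tri x y _) _; rewrite leq_add2l.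
Qed.

Lemma subseq_path_cost v0 v w0 w : subseq (w0 :: w) (v0 :: v) ->
  c0 v0 w0 + path_cost c1 w0 w + c0 (last w0 w) (last v0 v) <= path_cost c1 v0 v.
Proof.
elim: v v0 w0 w => [|v1 v IH] v0 w0 w /=.
  by case: (w0 =P v0) => [->|_] /eqP // ->; rewrite /= !c0_xx.
case: (w0 =P v0) => [->|_] H; last first.
  have := IH v1 w0 w H; set t := c0 (last w0 w) _.
  by have := c0_tri v0 v1 w0; lia.
case: w H => [|w1 w] H /=.
  rewrite c0_xx /= add0n; apply: leq_trans (c0_tri _ v1 _) _.
  by rewrite leq_add2l dist_le_path_cost.
have := IH v1 w1 w H; set t := c0 (last w1 w) _.
by rewrite c0_xx add0n; have := c1_tri v0 v1 w1; lia.
Qed.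

End SubseqCost.

Fixpoint fwalk (x : S) k : seq S := if k is k'.+1 then csucc x :: fwalk (csucc x) k' else [::].

Lemma iter_csucc k x y : cdist x y = k -> iter k csucc x = y.
Proof.
elim: k x => [|k IH] x H; first exact: cdist0_eq.
rewrite iterSr; apply: IH; rewrite cdist_csucc_l ?H //.
by apply: contra_eqN H => /eqP ->; rewrite cdist_xx.
Qed.

Lemma last_fwalk x y : last x (fwalk x (fcost x y)) = y.
Proof.
have last_iter k z : last z (fwalk z k) = iter k csucc z.
  by elim: k z => //= k IH z; rewrite IH -iterS iterSr.
rewrite last_iter /fcost; case: eqP => [->|_]; last exact: iter_csucc.
have -> : n = n.-1.+1 by have := rank_lt y; lia.
by rewrite iterSr; apply: iter_csucc; rewrite cdist_csucc_x.
Qed.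

Lemma fwalk_path k x : path (fun a b => b == csucc a) x (fwalk x k).
Proof. by elim: k x => //= k IH x; rewrite eqxx IH. Qed.

Lemma fwalk_cost k x : path_cost fcost x (fwalk x k) = k.
Proof. by elim: k x => //= k IH x; rewrite IH fcost_csucc. Qed.

Lemma fwalk_rcons x y : exists mid, fwalk x (fcost x y) = rcons mid y.
Proof.
have := fcost_gt0 x y; have := last_fwalk x y.
case: (fcost x y) => // k; rewrite [fwalk _ _]/= => Hl _.
by exists (belast (csucc x) (fwalk (csucc x) k)); rewrite -Hl /= lastI.
Qed.

Fixpoint forward_chain (x : S) (s : seq S) : seq S :=
  if s is y :: s' then fwalk x (fcost x y) ++ forward_chain y s' else [::].

Lemma forward_chain_subseq x s : subseq (x :: s) (x :: forward_chain x s).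
Proof.
elim: s x => [|y s IH] x /=; rewrite eqxx //.
have [mid ->] := fwalk_rcons x y.
by rewrite cat_rcons; apply: subseq_trans (IH y) (suffix_subseq mid _).
Qed.

Lemma forward_chain_last x s : last x (forward_chain x s) = last x s.
Proof. by elim: s x => //= y s IH x; rewrite last_cat last_fwalk IH. Qed.

Lemma forward_chain_path x s : path (fun a b => b == csucc a) x (forward_chain x s).
Proof. by elim: s x => //= y s IH x; rewrite cat_path fwalk_path last_fwalk IH. Qed.

Lemma forward_chain_cost x s :
  path_cost fcost x (forward_chain x s) = path_cost fcost x s.
Proof. by elim: s x => //= y s IH x; rewrite path_cost_cat fwalk_cost last_fwalk IH. Qed.

Fixpoint bwalk (x : S) k : seq S := if k is k'.+1 then cpred x :: bwalk (cpred x) k' else [::].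

Definition bsegment (x y : S) : seq S := if x == y then [:: y] else bwalk x (bcost x y).

Lemma iter_cpred k x y : cdist y x = k -> iter k cpred x = y.
Proof.
elim: k x => [|k IH] x H; first by apply/esym/cdist0_eq.
rewrite iterSr; apply: IH; rewrite cdist_cpred_r ?H //.
by apply: contra_eqN H => /eqP ->; rewrite cdist_xx.
Qed.

Lemma last_bsegment x y : last x (bsegment x y) = y.
Proof.
have last_iter k z : last z (bwalk z k) = iter k cpred z.
  by elim: k z => //= k IH z; rewrite IH -iterS iterSr.
by rewrite /bsegment; case: eqP => [->|_] //; rewrite last_iter; apply: iter_cpred.
Qed.

Lemma bsegment_path x y : path (fun a b => (b == a) || (b == cpred a)) x (bsegment x y).
Proof.
rewrite /bsegment; case: eqP => [->|_] /=; first by rewrite eqxx.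
by move: (bcost x y) => k; elim: k x => //= k IH x; rewrite eqxx orbT IH.
Qed.


Lemma bsegment_rcons x y : exists mid, bsegment x y = rcons mid y.
Proof.
have := last_bsegment x y; rewrite /bsegment; case: eqP => [_ _|Hxy]; first by exists [::].
have : bcost x y != 0 by apply: contra_not_neq Hxy => /cdist0_eq.
case: (bcost x y) => // k _ Hl.
by exists (belast (cpred x) (bwalk (cpred x) k)); rewrite -Hl /= lastI.
Qed.

Fixpoint backward_chain (x : S) (s : seq S) : seq S :=
  if s is y :: s' then bsegment x y ++ backward_chain y s' else [::].

Lemma backward_chain_subseq x s : subseq (x :: s) (x :: backward_chain x s).
Proof.
elim: s x => [|y s IH] x /=; rewrite eqxx //.
have [mid ->] := bsegment_rcons x y.
by rewrite cat_rcons; apply: subseq_trans (IH y) (suffix_subseq mid _).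
Qed.

Lemma backward_chain_last x s : last x (backward_chain x s) = last x s.
Proof. by elim: s x => //= y s IH x; rewrite last_cat last_bsegment IH. Qed.

Lemma backward_chain_path x s :
  path (fun a b => (b == a) || (b == cpred a)) x (backward_chain x s).
Proof. by elim: s x => //= y s IH x; rewrite cat_path bsegment_path last_bsegment IH. Qed.


Section NontrivialCycle.
Hypothesis card_S_gt2 : 2 < #|S|.

Lemma bcost_cpred x : bcost x (cpred x) = 1. Proof. rank_arith. Qed.
Lemma cdist_csucc x : cdist x (csucc x) = 1. Proof. rank_arith. Qed.
Lemma cdist_cpred x : cdist (cpred x) x = 1. Proof. rank_arith. Qed.
Lemma csucc_neq x : (csucc x == x) = false. Proof. rank_arith. Qed.
Lemma cpred_neq x : (cpred x == x) = false. Proof. rank_arith. Qed.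
Lemma csucc_cpred_neq x : (csucc x == cpred x) = false. Proof. rank_arith. Qed.

Lemma insert_cost_front a e :
  cdist (cpred a) e + fcost e a <= 1 -> bcost a e + bcost e a <= 0 -> False.
Proof. rank_arith. Qed.
Lemma insert_cost_end a e :
  fcost a e + cdist e (csucc a) <= 1 -> bcost a e + bcost e a <= 0 -> False.
Proof. rank_arith. Qed.

Lemma bsegment_cost x y : path_cost bcost x (bsegment x y) = bcost x y.
Proof.
rewrite /bsegment; case: eqP => [->|_] /=; first by rewrite bcost_xx.
by move: (bcost x y) => k; elim: k x => //= k IH x; rewrite IH bcost_cpred.
Qed.

Lemma backward_chain_cost x s :
  path_cost bcost x (backward_chain x s) = path_cost bcost x s.
Proof.
by elim: s x => //= y s IH x; rewrite path_cost_cat bsegment_cost last_bsegment IH.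
Qed.

End NontrivialCycle.

End CyclicOrder.

Arguments cdist {S}.
Arguments fcost {S}.
Arguments bcost {S}.

Section AvoidingWord.
Variable S : finType.
Implicit Types (u c : seq S).

Definition avoid_block (a : S) L : seq S := flatten (nseq L [seq x <- enum S | x != a]).

Lemma avoid_block_subseq a L c :
  all (fun x => x != a) c -> size c <= L -> subseq c (avoid_block a L).
Proof.
elim: L c => [|L IH] [|x c] //=; first by rewrite sub0seq.
move=> /andP [Hx Hc] HL; rewrite -cat1s; apply: cat_subseq; last exact: IH.
by rewrite sub1seq mem_filter Hx mem_enum.
Qed.

Lemma avoid_block_notin a L : a \notin avoid_block a L.
Proof. by elim: L => //= L IH; rewrite mem_cat negb_or IH mem_filter eqxx. Qed.

(* A word not containing [u] as a subsequence, into which every word of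
   length at most [L] not containing [u] embeds: a longest counterexample. *)
Fixpoint avoid_word u L : seq S :=
  match u with
  | [::] => [::]
  | [:: a] => avoid_block a L
  | a :: u' => avoid_block a L ++ a :: avoid_word u' L
  end.

Lemma avoid_word_avoids u L : u != [::] -> ~~ subseq u (avoid_word u L).
Proof.
elim: u => [//|a [|b u] IH] _; first by rewrite sub1seq avoid_block_notin.
by rewrite [avoid_word _ _]/= subseq_cons_cat_notin ?avoid_block_notin //= eqxx IH.
Qed.

Lemma avoid_word_universal u L c : u != [::] -> size c <= L ->
  ~~ subseq u c -> subseq c (avoid_word u L).
Proof.
have avoid_all a c' : a \notin c' -> all (fun x => x != a) c'.
  by move=> Ha; apply/allP => x Hx; apply: contraNneq Ha => <-.
elim: u c => [//|a u IH] c _ HL Hn.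
case: (boolP (a \in c)) => Ha; last first.
  have Hs := avoid_block_subseq (avoid_all _ _ Ha) HL.
  by case: u {IH Hn} => [|b u] //=; apply: subseq_trans Hs (prefix_subseq _ _).
case: u IH Hn => [|b u] IH Hn; first by rewrite sub1seq Ha in Hn.
have [c1 [c2 [Ec H1]]] := split_first_occ Ha.
have H2 : ~~ subseq (b :: u) c2.
  by apply: contra Hn; rewrite Ec subseq_cons_cat_notin //= eqxx.
rewrite [avoid_word _ _]/= -/(avoid_word (b :: u) L) Ec; apply: cat_subseq.
  by apply: avoid_block_subseq (avoid_all _ _ H1) _; move: HL; rewrite Ec size_cat; lia.
by rewrite /= eqxx; apply: IH => //; move: HL; rewrite Ec size_cat /=; lia.
Qed.

End AvoidingWord.

Section UniqueBlocksCase.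
Variable S : finType.
Implicit Types (q : pattern S).

Definition fwd_word (a1 : S) (u' : seq S) : seq S :=
  cpred a1 :: a1 :: forward_chain a1 u' ++ [:: csucc (last a1 u')].
Definition bwd_word (a1 : S) (u' : seq S) : seq S := a1 :: backward_chain a1 u'.

Lemma fwd_word_path (a1 : S) (u' : seq S) :
  path (fun a b => b == csucc a) (cpred a1)
    (a1 :: forward_chain a1 u' ++ [:: csucc (last a1 u')]).
Proof.
by rewrite /= csucc_cpred eqxx cat_path forward_chain_path /= forward_chain_last eqxx.
Qed.

Lemma fwd_word_subseq (a1 : S) (u' : seq S) : subseq (a1 :: u') (fwd_word a1 u').
Proof.
apply: subseq_trans (subseq_cons _ _); apply: subseq_trans (forward_chain_subseq _ _) _.
by rewrite -cat_cons prefix_subseq.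
Qed.

Lemma bwd_word_subseq (a1 : S) (u' : seq S) : subseq (a1 :: u') (bwd_word a1 u').
Proof. exact: backward_chain_subseq. Qed.

Lemma fwd_word_cost (a1 : S) (u' : seq S) w0 w : subseq (w0 :: w) (fwd_word a1 u') ->
  cdist (cpred a1) w0 + path_cost fcost w0 w + cdist (last w0 w) (csucc (last a1 u'))
  <= (path_cost fcost a1 u').+2.
Proof.
move=> H; have := subseq_path_cost (@cdist_xx S) (@cdist_fcost_tri S) (@fcost_cdist_tri S) H.
rewrite /= last_cat /= path_cost_cat forward_chain_cost forward_chain_last /=.
by rewrite fcost_cpred fcost_csucc; lia.
Qed.

Section NontrivialCycle.
Hypothesis card_S_gt2 : 2 < #|S|.

Lemma bwd_word_cost (a1 : S) (u' : seq S) w0 w : subseq (w0 :: w) (bwd_word a1 u') ->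
  bcost a1 w0 + path_cost bcost w0 w + bcost (last w0 w) (last a1 u')
  <= path_cost bcost a1 u'.
Proof.
move=> H; have := subseq_path_cost (@bcost_xx S) (@bcost_tri S) (@bcost_tri S) H.
by rewrite /bwd_word (backward_chain_cost card_S_gt2) backward_chain_last.
Qed.

(* The letter word is a maximal common subsequence of the two examples:
   inserting any letter would increase the forward or the backward cost. *)
Lemma no_common_extension (a1 : S) u' u1 u2 e :
  a1 :: u' = u1 ++ u2 ->
  subseq (u1 ++ e :: u2) (fwd_word a1 u') -> subseq (u1 ++ e :: u2) (bwd_word a1 u') ->
  False.
Proof.
case: u1 => [|x1 u1] /= Eu H1 H2.
  rewrite -Eu in H1 H2.
  have := fwd_word_cost H1; have := bwd_word_cost H2.
  rewrite /= (cdist_csucc card_S_gt2) bcost_xx => HB HA.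
  by apply: (insert_cost_front card_S_gt2 (a := a1) (e := e)); lia.
case: Eu H1 H2 => <- Eu'; case: u2 Eu' => [|y u2] Eu' H1 H2.
  rewrite cats0 in Eu'; subst u1.
  have := fwd_word_cost H1; have := bwd_word_cost H2.
  rewrite /= !path_cost_cat !last_cat /= bcost_xx (cdist_cpred card_S_gt2).
  by move=> HB HA; apply: (insert_cost_end card_S_gt2 (a := last a1 u') (e := e)); lia.
have := fwd_word_cost H1; have := bwd_word_cost H2.
rewrite !path_cost_cat !last_cat /= Eu' path_cost_cat /= (cdist_cpred card_S_gt2) bcost_xx.
rewrite last_cat /= (cdist_csucc card_S_gt2) bcost_xx => HB.
rewrite path_cost_cat /= => HA.
by apply: (@insert_cost_between _ (last a1 u1) e y); lia.
Qed.

(* A pattern generating both positive examples is guarded and starts with a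
   variable: two adjacent letters would be a successor pair in [fwd_word] and
   an equal or predecessor pair in [bwd_word], and the two examples differ in
   their first and in their last letter. *)
Lemma fwd_bwd_guarded q (a1 : S) (u' : seq S) :
  inL q (fwd_word a1 u') -> inL q (bwd_word a1 u') ->
  guarded q && ~~ starts_with_letter q.
Proof.
move=> [h1 E1] [h2 E2]; apply/andP; split.
  apply: contraT => Hng; case: (unguarded_witness Hng) => [[q1 [q2 [a [b Eq]]]]|[q' [b Eq]]].
    rewrite Eq subst_adjacent in E1; rewrite Eq subst_adjacent in E2.
    have /eqP Hb1 := path_adjacent (fwd_word_path a1 u') (esym E1).
    case/orP: (path_adjacent (backward_chain_path a1 u') (esym E2)) => /eqP Hb2.
      by move: (csucc_neq card_S_gt2 a); rewrite -Hb1 Hb2 eqxx.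
    by move: (csucc_cpred_neq card_S_gt2 a); rewrite -Hb1 Hb2 eqxx.
  rewrite Eq subst_rcons /= cats1 in E1; rewrite Eq subst_rcons /= cats1 in E2.
  have := congr1 (last a1) E1; have := congr1 (last a1) E2.
  rewrite !last_rcons /= last_cat backward_chain_last /= => <- Hs.
  by move: (csucc_neq card_S_gt2 b); rewrite -Hs eqxx.
case: q E1 E2 => [|[x|a] q] //= [Ea1 _] [Ea2 _].
by move: (cpred_neq card_S_gt2 a1); rewrite -Ea1 -Ea2 eqxx.
Qed.

(* Teaching set when every block has a variable occurring once and there is
   at least one letter: the language is the set of supersequences of the
   letter word [a1 :: u'], and a consistent regular pattern is guarded, so
   its language is the set of supersequences of its own letter word [c].
   The negative example forces [a1 :: u'] into [c], and [c] cannot be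
   larger since it is a common subsequence of the two positive examples. *)
Lemma unique_blocks_teaching (X1 : seq nat) (rest : seq (S * seq nat)) a1 u' :
  map fst rest = a1 :: u' -> unique_in_every_block X1 rest ->
  teaching_set (@reg_class S) (block_pattern X1 rest)
    [:: (fwd_word a1 u', true); (bwd_word a1 u', true);
        (avoid_word (a1 :: u') (size (fwd_word a1 u')), false)].
Proof.
move=> Hu Huniq; have HLp := unique_blocks_langE Huniq; rewrite Hu in HLp.
split.
  move=> x; rewrite !inE => /or3P [] /eqP -> /=; rewrite HLp.
  - by split => // _; apply: fwd_word_subseq.
  - by split => // _; apply: bwd_word_subseq.
  - split => // H; have := @avoid_word_avoids S (a1 :: u') (size (fwd_word a1 u')) isT.
    by rewrite H.
move=> q [/eqP Hq Hr] Hcons.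
have H1 : inL q (fwd_word a1 u') by apply: consistent_pos Hcons _; rewrite inE eqxx.
have H2 : inL q (bwd_word a1 u') by apply: consistent_pos Hcons _; rewrite !inE eqxx orbT.
have HN : ~ inL q (avoid_word (a1 :: u') (size (fwd_word a1 u'))).
  by apply: consistent_neg Hcons _; rewrite !inE eqxx !orbT.
have /andP [Hg Hs] := fwd_bwd_guarded H1 H2.
have HLq := guarded_langE Hq Hg Hr Hs.
have Hc1 : subseq (letters q) (fwd_word a1 u') by rewrite -HLq.
have Hc2 : subseq (letters q) (bwd_word a1 u') by rewrite -HLq.
have Huc : subseq (a1 :: u') (letters q).
  apply: contraT => Hn; case: HN; rewrite HLq.
  by apply: avoid_word_universal Hn => //; apply: size_subseq Hc1.
have Ec : letters q = a1 :: u'.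
  apply/esym/eqP; rewrite -(size_subseq_leqif Huc) eqn_leq size_subseq //= leqNgt.
  apply/negP => /(subseq_extend Huc) [u1 [u2 [e [E He]]]].
  exact: no_common_extension E (subseq_trans He Hc1) (subseq_trans He Hc2).
by move=> w; rewrite HLq HLp Ec.
Qed.

End NontrivialCycle.

(* Teaching set for a single block containing a variable occurring once:
   the language is everything, and so is that of any regular pattern
   generating the empty word. *)
Lemma single_block_teaching (X1 : seq nat) :
  unique_in_every_block X1 ([::] : seq (S * seq nat)) ->
  teaching_set (@reg_class S) (block_pattern X1 [::]) [:: ([::], true)].
Proof.
move=> Huniq; have HLp := unique_blocks_langE Huniq.
split; first by move=> x; rewrite inE => /eqP -> /=; rewrite HLp sub0seq.
move=> q [/eqP Hq Hr] Hcons.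
have [h Eh] : inL q [::] by apply: consistent_pos Hcons _; rewrite inE.
have Hl : letters q = [::].
  by apply/eqP; rewrite -subseq0 -Eh letters_subseq_subst.
have /andP [Hg Hs] := letterless_guarded Hl.
by move=> w; rewrite (guarded_langE Hq Hg Hr Hs) HLp Hl !sub0seq.
Qed.

End UniqueBlocksCase.

Lemma third_letter (T : finType) : 2 < #|T| -> forall x y : T, exists c : T, c != x /\ c != y.
Proof.
move=> H x y; case: (pickP (fun c => (c != x) && (c != y))) => [c /andP [] | H0].
  by exists c.
suff : #|T| <= 2 by lia.
apply: leq_trans (card_size [:: x; y]); apply: subset_leq_card.
by apply/subsetP => c _; have := H0 c; rewrite !inE; case: eqP => //= _; case: eqP.
Qed.

(* Only the nonemptiness of the blocks is used: the case distinction on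
   variables occurring once covers every block pattern. *)
Theorem mainTheorem5 (Sigma : finType) (hz : 3 <= #|Sigma|) (p : pattern Sigma) :
  simple_block_regular p -> TD_le (@reg_class Sigma) p 3.
Proof.
move=> [X1 [rest [-> [/blocks_nonempty [HX1 Hall] _]]]].
case: (boolP (unique_in_every_block X1 rest)) => Huniq.
  case Eu: (map fst rest) => [|a1 u'].
    have Er : rest = [::] by apply/nilP; rewrite /nilp -(size_map fst) Eu.
    exists [:: ([::], true)]; split => //.
    by rewrite Er; apply: single_block_teaching; rewrite -Er.
  by eexists; split; last apply: (unique_blocks_teaching hz Eu Huniq).
have [l Hl Hrep] := repeated_block_exists Huniq.
have [d0 _] : exists d0 : Sigma, true by move: hz => /ltnW/ltnW/card_gt0P [d0 _]; exists d0.
set u := map fst rest.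
have [c [Hc1 Hc2]] := third_letter hz (nth d0 u l.-1) (nth d0 u l).
by eexists; split; last apply: (repeated_block_teaching HX1 Hall Hl Hrep Hc1 Hc2).
Qed.
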